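(* Let $H\in\mathbb R^{n\times n}$, $f\in\mathbb R^n$, $A\in\mathbb R^{m\times n}$, $b\in\mathbb R^m$, with $\mathcal X=\{x\in\mathbb R^n: Ax\le b\}$ nonempty and $H+H^\top$ positive definite. Let $x^*$ be the unique solution of the affine variational inequality: find $x\in\mathcal X$ with $(Hx+f)^\top(y-x)\ge0$ for all $y\in\mathcal X$, and let $\mathcal A=\{i\in\{1,\dots,m\}: A_ix^*=b_i\}$. Assume (LICQ) the rows of $A_{\mathcal A}$ are linearly independent, so that there is a unique $\lambda^*\in\mathbb R^m$ with $Hx^*+f+A^\top\lambda^*=0$ and $0\le\lambda^*\perp b-Ax^*\ge0$; and assume (strict complementarity) $\lambda^*_i>0$ for all $i\in\mathcal A$. Then the DR-DAQP algorithm (described in the context) terminates after finitely many iterations, returning the exact solution $(x^*,\lambda^* )$ (with the returned multiplier understood as $\lambda^*_{\mathcal A}$, the remaining components being zero).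
   Context: Notation: $A_i$, $b_i$ denote the $i$-th row of $A$ and entry of $b$; for an index set $\mathcal S$, $A_{\mathcal S}$, $b_{\mathcal S}$, $\lambda_{\mathcal S}$ denote the corresponding submatrix/subvectors. Fix $\rho>0$, set $H_s=\tfrac12(H+H^\top)$, $\tilde H=\rho I+H_s$, and for $z\in\mathbb R^n$ let $\tilde f(z)=f+(H-\tilde H)z$. For a parameter $z$, let $\mathrm{QP}(z)$ denote the strictly convex quadratic program $\min_x \tfrac12 x^\top\tilde Hx+\tilde f(z)^\top x$ subject to $Ax\le b$; its active set at the minimizer $y$ is $\{i: A_iy=b_i\}$. DR-DAQP algorithm: start from an initial $z_0\in\mathbb R^n$, set $\delta=\infty$, and let $\mathcal A_{-1}$ be undefined (so the test below fails at $k=0$). For $k=0,1,2,\dots$: 1. Let $y_k$ be the solution of $\mathrm{QP}(z_k)$ and $\mathcal A_k$ its active set. 2. If $\mathcal A_k=\mathcal A_{k-1}$: let $(\tilde z_k,\lambda_k)$ solve the linear system $\begin{bmatrix}H & A_{\mathcal A_k}^\top\\ A_{\mathcal A_k} & 0\end{bmatrix}\begin{bmatrix}x\\ \lambda\end{bmatrix}=\begin{bmatrix}-f\\ b_{\mathcal A_k}\end{bmatrix}$. If $\lambda_k\ge0$ and $A\tilde z_k\le b$, stop and return $(\tilde z_k,\lambda_k)$. Otherwise, let $\tilde y_k$ be the solution of $\mathrm{QP}(\tilde z_k)$ and redefine $\mathcal A_k$ as its active set; if $\|\tilde y_k-\tilde z_k\|<\delta$, replace $y_k\leftarrow\tilde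 y_k$, $z_k\leftarrow\tilde z_k$, and set $\delta\leftarrow\|\tilde y_k-\tilde z_k\|$. 3. Set $z_{k+1}=(\rho I+H)^{-1}\big(\rho y_k+Hz_k+\tfrac{1}{2}H_s(y_k-z_k)\big)$. The algorithm iterates indefinitely unless it stops in step 2. *)

From HB Require Import structures.
From mathcomp Require Import all_boot all_order all_algebra.
From mathcomp Require Import reals.
Set Implicit Arguments. Unset Strict Implicit. Unset Printing Implicit Defensive.
Import Order.TTheory GRing.Theory Num.Theory.
Local Open Scope ring_scope.

Section DRDAQP.
Variables (R : realType) (n m : nat).
Variables (H : 'M[R]_n) (f : 'cV[R]_n) (A : 'M[R]_(m, n)) (b : 'cV[R]_m) (rho : R).

Definition Hs : 'M[R]_n := 2^-1 *: (H + H^T).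
Definition Htil : 'M[R]_n := rho%:M + Hs.
Definition ftil (z : 'cV[R]_n) : 'cV[R]_n := f + (H - Htil) *m z.

Definition feasible (x : 'cV[R]_n) : Prop := forall i, (A *m x) i 0 <= b i 0.

Definition qp_obj (ft x : 'cV[R]_n) : R :=
  2^-1 * (x^T *m Htil *m x) 0 0 + (ft^T *m x) 0 0.

Definition qp_sol (z y : 'cV[R]_n) : Prop :=
  feasible y /\ forall x, feasible x -> qp_obj (ftil z) y <= qp_obj (ftil z) x.

Definition active (y : 'cV[R]_n) : {set 'I_m} := [set i | (A *m y) i 0 == b i 0].

(* (x, lam_S) solves [H A_S^T; A_S 0][x; lam] = [-f; b_S];  the multiplier
   lam_S is stored as a vector of R^m that vanishes outside S. *)
Definition kkt_sys (S : {set 'I_m}) (x : 'cV[R]_n) (lam : 'cV[R]_m) : Prop :=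
  H *m x + A^T *m lam = - f /\
  (forall i, i \in S -> (A *m x) i 0 = b i 0) /\
  (forall i, i \notin S -> lam i 0 = 0).

Definition norm2 (v : 'cV[R]_n) : R := Num.sqrt (\sum_i (v i 0) ^+ 2).

(* delta : option R, None = +infinity *)
Definition lt_delta (d : option R) (v : R) : bool :=
  if d is Some d' then v < d' else true.

Definition znext (y z : 'cV[R]_n) : 'cV[R]_n :=
  invmx (rho%:M + H) *m (rho *: y + H *m z + 2^-1 *: (Hs *m (y - z))).

(* algorithm state at the start of iteration k: (z_k, delta, A_{k-1}) *)
Record state := State { st_z : 'cV[R]_n; st_delta : option R;
                        st_prev : option {set 'I_m} }.

Inductive outcome :=
| Stop of 'cV[R]_n & 'cV[R]_m
| Cont of state.

Definition init_state (z0 : 'cV[R]_n) : state := State z0 None None.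

Definition dr_step (s : state) (o : outcome) : Prop :=
  exists y, qp_sol (st_z s) y /\
  (if st_prev s == Some (active y) then
     exists zt lam, kkt_sys (active y) zt lam /\
       ( ((forall i, i \in active y -> 0 <= lam i 0) /\ feasible zt /\
          o = Stop zt lam)
       \/
         (~ ((forall i, i \in active y -> 0 <= lam i 0) /\ feasible zt) /\
          exists yt, qp_sol zt yt /\
            (if lt_delta (st_delta s) (norm2 (yt - zt))
             then o = Cont (State (znext yt zt) (Some (norm2 (yt - zt)))
                                  (Some (active yt)))
             else o = Cont (State (znext y (st_z s)) (st_delta s)
                                  (Some (active yt))))))
   else o = Cont (State (znext y (st_z s)) (st_delta s) (Some (active y)))).

Definition subrows (S : {set 'I_m}) : 'M[R]_(#|S|, n) :=
  \matrix_(i < #|S|) row (enum_val i) A.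

End DRDAQP.

(* Away from the steps that update [delta], the iteration [z |-> znext y z] is a
   Douglas--Rachford-type scheme for the splitting [rho I + H = M + N] with
   [M = rho I + Hs / 2] symmetric positive definite and [N = H - Hs / 2].  Writing
   [q v = v^T H v] and [z'] for the next iterate, the quantity
   [|(M - N) (z - xstar)|^2] in the metric [M^-1] drops by at least
   [q (y - xstar) + q (2 z' - z - xstar)] at every step.  The threshold [delta] only
   takes the finitely many values attached to active sets and decreases at each
   update, so eventually the plain iteration runs, [y] and [2 z' - z] approach
   [xstar], and by LICQ and strict complementarity the active set of [y] becomes that
   of [xstar] for good.  Two equal consecutive active sets trigger the KKT test, and
   the KKT point of the optimal active set is [(xstar, lamstar)], which passes it.
   Conversely, a pair passing the test solves the variational inequality, hence is
   [(xstar, lamstar)] by strong monotonicity of [H] and LICQ. *)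

From HB Require Import structures.
From mathcomp Require Import all_boot all_order all_algebra.
From mathcomp Require Import reals ring lra.
From mathcomp Require Import boolp.
From mathcomp Require classical_sets.
Import Order.TTheory GRing.Theory Num.Theory.
Local Open Scope ring_scope.
Set Implicit Arguments. Unset Strict Implicit. Unset Printing Implicit Defensive.

Lemma mxDE (R : nmodType) p r (M N : 'M[R]_(p, r)) i j : (M + N) i j = M i j + N i j.
Proof. by rewrite mxE. Qed.

Lemma mxBE (R : zmodType) p r (M N : 'M[R]_(p, r)) i j : (M - N) i j = M i j - N i j.
Proof. by rewrite !mxE. Qed.

Lemma mxZE (R : pzSemiRingType) p r a (M : 'M[R]_(p, r)) i j : (a *: M) i j = a * M i j.
Proof. by rewrite mxE. Qed.

(* Proves an identity between vectors that is linear in matrix-vector products,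
   from hypotheses of the same shape, by comparing entries. *)
Ltac entrywise_lra :=
  repeat progress rewrite ?(mulmxDl, mulmxDr, mulNmx, mulmxN, mul_scalar_mx)
    -?scalemxAl -?scalemxAr;
  repeat (let h := fresh in move=> /matrixP h);
  let i := fresh "i" in let j := fresh "j" in
  apply/matrixP => i j;
  repeat match goal with h : _ =2 _ |- _ => move: (h i j); clear h end;
  repeat progress rewrite ?[(_ + _ : 'M_(_, _)) _ _]mxE ?[(- _ : 'M_(_, _)) _ _]mxE
          ?[(_ *: _ : 'M_(_, _)) _ _]mxE ?[(0 : 'M_(_, _)) _ _]mxE;
  lra.

Section DotProduct.
Variable R : realFieldType.

Definition vdot p (u v : 'cV[R]_p) : R := (u^T *m v) 0 0.
Definition qform p (Q : 'M[R]_p) (v : 'cV[R]_p) : R := vdot v (Q *m v).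
Definition posdef p (Q : 'M[R]_p) : Prop := forall v, v != 0 -> 0 < qform Q v.

Variable p : nat.
Implicit Types (a : R) (u v w c : 'cV[R]_p) (Q : 'M[R]_p).

Lemma vdotE u v : vdot u v = \sum_i u i 0 * v i 0.
Proof. by rewrite /vdot !mxE; apply: eq_bigr => i _; rewrite mxE. Qed.

Lemma vdotC u v : vdot u v = vdot v u.
Proof. by rewrite !vdotE; apply: eq_bigr => i _; rewrite mulrC. Qed.

Lemma vdotDl u v w : vdot (u + v) w = vdot u w + vdot v w.
Proof. by rewrite !vdotE -big_split; apply: eq_bigr => i _; rewrite mxE mulrDl. Qed.

Lemma vdotZl a u v : vdot (a *: u) v = a * vdot u v.
Proof. by rewrite !vdotE mulr_sumr; apply: eq_bigr => i _; rewrite mxE mulrA. Qed.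

Lemma vdotNl u v : vdot (- u) v = - vdot u v.
Proof. by rewrite -scaleN1r vdotZl mulN1r. Qed.

Lemma vdotBl u v w : vdot (u - v) w = vdot u w - vdot v w.
Proof. by rewrite vdotDl vdotNl. Qed.

Lemma vdotDr u v w : vdot u (v + w) = vdot u v + vdot u w.
Proof. by rewrite vdotC vdotDl !(vdotC u). Qed.

Lemma vdotZr a u v : vdot u (a *: v) = a * vdot u v.
Proof. by rewrite vdotC vdotZl vdotC. Qed.

Lemma vdotNr u v : vdot u (- v) = - vdot u v.
Proof. by rewrite vdotC vdotNl vdotC. Qed.

Lemma vdotBr u v w : vdot u (v - w) = vdot u v - vdot u w.
Proof. by rewrite vdotDr vdotNr. Qed.

Lemma vdot0l v : vdot 0 v = 0.
Proof. by rewrite -(scale0r 0) vdotZl mul0r. Qed.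

Lemma vdot0r v : vdot v 0 = 0.
Proof. by rewrite vdotC vdot0l. Qed.

Lemma vdot_mulmxl r (M : 'M[R]_(r, p)) u (v : 'cV[R]_r) :
  vdot (M *m u) v = vdot u (M^T *m v).
Proof. by rewrite /vdot trmx_mul mulmxA. Qed.

Lemma vdot_mulmxr r (M : 'M[R]_(p, r)) u (v : 'cV[R]_r) :
  vdot u (M *m v) = vdot (M^T *m u) v.
Proof. by rewrite /vdot trmx_mul trmxK mulmxA. Qed.

Lemma vdot_ge0 v : 0 <= vdot v v.
Proof. by rewrite vdotE sumr_ge0 // => i _; rewrite -expr2 sqr_ge0. Qed.

Lemma vdot_eq0 v : (vdot v v == 0) = (v == 0).
Proof.
apply/idP/eqP => [|->]; last by rewrite vdot0l.
rewrite vdotE psumr_eq0 => [/allP v0|i _]; last by rewrite -expr2 sqr_ge0.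
apply/matrixP => i j; rewrite (ord1 j) mxE.
by have /= := v0 i (mem_index_enum _); rewrite mulf_eq0 orbb => /eqP.
Qed.

Lemma vdot_gt0 v : v != 0 -> 0 < vdot v v.
Proof. by move=> v0; rewrite lt_def vdot_eq0 v0 vdot_ge0. Qed.

Lemma qform_sym Q u v : Q^T = Q -> vdot u (Q *m v) = vdot v (Q *m u).
Proof. by move=> QT; rewrite vdot_mulmxr QT vdotC. Qed.

Lemma qformE Q v : qform Q v = qform (2^-1 *: (Q + Q^T)) v.
Proof.
rewrite /qform -scalemxAl vdotZr mulmxDl vdotDr [vdot v (Q^T *m v)]vdot_mulmxr.
by rewrite trmxK [vdot (Q *m v) v]vdotC; field.
Qed.

Lemma qformD Q u v : Q^T = Q ->
  qform Q (u + v) = qform Q u + 2 * vdot u (Q *m v) + qform Q v.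
Proof.
move=> QT; rewrite /qform mulmxDr !(vdotDl, vdotDr) (qform_sym v u QT).
by rewrite mulr2n mulrDl mul1r !addrA.
Qed.

Lemma qformZ Q a v : qform Q (a *: v) = a ^+ 2 * qform Q v.
Proof. by rewrite /qform -scalemxAr vdotZl vdotZr mulrA expr2. Qed.

Lemma posdef_ge0 Q v : posdef Q -> 0 <= qform Q v.
Proof.
by move=> Qpd; case: (eqVneq v 0) => [->|/Qpd/ltW //]; rewrite /qform vdot0l.
Qed.

Lemma posdef_eq0 Q v : posdef Q -> qform Q v <= 0 -> v = 0.
Proof. by move=> Qpd; apply: contraTeq => /Qpd; rewrite -ltNge. Qed.

Lemma posdef_unitmx Q : posdef Q -> Q \in unitmx.
Proof.
move=> Qpd; rewrite -unitmx_tr -row_free_unit; apply: inj_row_free => v vQ0.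
have Qv0 : Q *m v^T = 0 by apply/trmx_inj; rewrite trmx_mul trmxK vQ0 trmx0.
apply/trmx_inj; rewrite trmx0; apply: (posdef_eq0 Qpd).
by rewrite /qform Qv0 vdot0r.
Qed.

Lemma qform_invmx_ge0 Q c : Q^T = Q -> posdef Q -> 0 <= qform (invmx Q) c.
Proof.
move=> QT Qpd; have Qu := posdef_unitmx Qpd.
by rewrite /qform -{1}[c](mulKVmx Qu) vdot_mulmxl QT posdef_ge0.
Qed.

Lemma vdot_sqr_le Q c v : Q^T = Q -> posdef Q ->
  vdot c v ^+ 2 <= qform (invmx Q) c * qform Q v.
Proof.
move=> QT Qpd; have Qu := posdef_unitmx Qpd.
set w := invmx Q *m c.
have cE : c = Q *m w by rewrite mulKVmx.
have -> : qform (invmx Q) c = qform Q w by rewrite /qform -/w {1}cE vdot_mulmxl QT vdotC.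
rewrite {1}cE vdot_mulmxl QT.
case: (eqVneq v 0) => [->|v0]; first by rewrite mulmx0 vdot0r /qform mulmx0 vdot0r expr0n /= mulr0.
have s_gt0 := Qpd v v0.
set t := vdot w (Q *m v); set s := qform Q v.
have := posdef_ge0 ((- (t / s)) *: v + w) Qpd.
rewrite qformD // qformZ vdotZl (qform_sym v w QT) -/t -/s.
have -> : (- (t / s)) ^+ 2 * s + 2 * (- (t / s) * t) + qform Q w = qform Q w - t ^+ 2 / s.
  by field; rewrite gt_eqF.
by rewrite subr_ge0 ler_pdivrMr // mulrC.
Qed.

Lemma qform_invmx_shift Q s d : Q^T = Q -> Q \in unitmx ->
  qform (invmx Q) (s + Q *m d) = qform (invmx Q) s + 2 * vdot s d + qform Q d.
Proof.
move=> QT Qu; have QiT : (invmx Q)^T = invmx Q by rewrite trmx_inv QT.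
by rewrite qformD // mulKmx // /qform vdot_mulmxl QT mulKmx.
Qed.

Lemma mulmx_entry_vdot r (M : 'M[R]_(r, p)) v j : (M *m v) j 0 = vdot (row j M)^T v.
Proof. by rewrite vdotE mxE; apply: eq_bigr => k _; rewrite !mxE. Qed.

Lemma qform_small_vdot_small Q (cs : seq 'cV[R]_p) eta : Q^T = Q -> posdef Q -> 0 < eta ->
  exists2 eps, 0 < eps & forall v, qform Q v < eps -> forall c, c \in cs -> `|vdot c v| < eta.
Proof.
move=> QT Qpd eta_gt0; elim: cs => [|c cs [eps eps_gt0 small]]; first by exists 1.
have K_ge0 := qform_invmx_ge0 c QT Qpd; set K := qform (invmx Q) c in K_ge0.
have K1_gt0 : 0 < 1 + K by rewrite ltr_wpDr.
have epsc_gt0 : 0 < eta ^+ 2 / (1 + K) by rewrite divr_gt0 ?exprn_gt0.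
exists (Num.min eps (eta ^+ 2 / (1 + K))) => [|v]; first by rewrite lt_min eps_gt0.
rewrite lt_min => /andP[v_eps v_epsc] d; rewrite inE => /predU1P[->|]; last exact: small.
have cv_le := vdot_sqr_le c v QT Qpd; rewrite -/K in cv_le.
have qv_ge0 := posdef_ge0 v Qpd.
have : (1 + K) * qform Q v < (1 + K) * (eta ^+ 2 / (1 + K)) by rewrite ltr_pM2l.
rewrite mulrCA mulfV ?gt_eqF // mulr1 => qv_lt.
by rewrite ltr_norml; nra.
Qed.

End DotProduct.

Lemma finite_pos_lower_bound (R : realFieldType) (I : finType) (P : pred I) (F : I -> R) :
  (forall i, P i -> 0 < F i) -> exists2 eta, 0 < eta & forall i, P i -> eta <= F i.
Proof.
move=> F_gt0; exists (\big[Num.min/1]_(i | P i) F i); first exact: lt_bigmin.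
by move=> i Pi; apply: bigmin_le_cond.
Qed.

Lemma nonincn_stationary (g : nat -> nat) :
  (forall k, g k.+1 <= g k)%N -> exists K, forall k, (K <= k)%N -> g k = g K.
Proof.
move=> g_noninc; have g_homo := @Order.NatMonotonyTheory.nonincnP _ nat g g_noninc.
have attained : exists N, `[< exists K, g K = N >] by exists (g 0%N); apply/asboolP; exists 0%N.
case: (ex_minnP attained) => _ /asboolP[K <-] g_min; exists K => k Kk.
have gk_le : (g k <= g K)%N := g_homo _ _ Kk.
by apply/eqP; rewrite eqn_leq gk_le g_min //; apply/asboolP; exists k.
Qed.

Lemma gaps_eventually_lt (R : realType) (v c : nat -> R) eps : 0 < eps ->
  (forall k, 0 <= v k) -> (forall k, 0 <= c k) -> (forall k, v k.+1 + c k <= v k) ->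
  exists K, forall k, (K <= k)%N -> c k < eps.
Proof.
move=> eps_gt0 v_ge0 c_ge0 v_dec.
have v_noninc k : v k.+1 <= v k by have := v_dec k; have := c_ge0 k; lra.
have v_homo := Order.NatMonotonyTheory.nonincnP v_noninc.
have v_inf : classical_sets.has_inf (fun x => exists k, v k = x).
  by split; [exists (v 0%N), 0%N | exists 0 => _ [k <-]].
have [_ [K <-] vK_lt] := inf_adherent eps_gt0 v_inf.
exists K => k Kk; have vk_le : v k <= v K := v_homo _ _ Kk.
have inf_le : inf (fun x => exists k, v k = x) <= v k.+1.
  by apply: ge_inf; [case: v_inf | exists k.+1].
have := v_dec k; lra.
Qed.

Section QuadraticObjective.
Variables (R : realFieldType) (p : nat).
Implicit Types (Q : 'M[R]_p) (c d x y : 'cV[R]_p).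

Definition quadobj Q c x : R := 2^-1 * qform Q x + vdot c x.

Lemma quadobjD Q c y d t : Q^T = Q ->
  quadobj Q c (y + t *: d) =
  quadobj Q c y + t * vdot (Q *m y + c) d + t ^+ 2 / 2 * qform Q d.
Proof.
move=> QT; rewrite /quadobj qformD // qformZ -scalemxAr !(vdotZr, vdotDr, vdotDl).
by rewrite vdot_mulmxl QT; field.
Qed.

Lemma descent_step_exists (g C T : R) : g < 0 -> 0 <= C -> 0 < T ->
  exists2 t, 0 < t <= T & t * g + t ^+ 2 / 2 * C < 0.
Proof.
move=> g_lt0 C_ge0 T_gt0; have C1_gt0 : 0 < 1 + C by rewrite ltr_wpDr.
set t := Num.min T (- g / (1 + C)).
have t_gt0 : 0 < t by rewrite lt_min T_gt0 divr_gt0 ?oppr_gt0.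
have : t <= - g / (1 + C) by rewrite ge_min lexx orbT.
rewrite ler_pdivlMr // => tC_le.
exists t; first by rewrite t_gt0 ge_min lexx.
nra.
Qed.

End QuadraticObjective.

Section Polyhedron.
Variables (R : realType) (n m : nat) (A : 'M[R]_(m, n)) (b : 'cV[R]_m).
Local Notation feasible := (feasible A b).
Implicit Types (G Q : 'M[R]_n) (c d g x y : 'cV[R]_n).

Definition quad_min Q c y :=
  feasible y /\ forall x, feasible x -> quadobj Q c y <= quadobj Q c x.

Definition avi_sol G g x :=
  feasible x /\ forall y, feasible y -> 0 <= vdot (G *m x + g) (y - x).

Lemma feasible_along y d : feasible y ->
  (forall j, 0 < (A *m d) j 0 -> (A *m y) j 0 < b j 0) ->
  exists2 T, 0 < T & forall t, 0 <= t <= T -> feasible (y + t *: d).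
Proof.
move=> y_feas d_free.
pose slope j := (b j 0 - (A *m y) j 0) / (A *m d) j 0.
have slope_gt0 j : 0 < (A *m d) j 0 -> 0 < slope j.
  by move=> dj; rewrite divr_gt0 // subr_gt0 d_free.
have [T T_gt0 T_le] := finite_pos_lower_bound slope_gt0.
exists T => // t /andP[t_ge0 t_le] j.
rewrite mulmxDr -scalemxAr mxDE mxZE; have := y_feas j.
case: (ltrP 0 ((A *m d) j 0)) => [dj|dj]; last by nra.
have : t * (A *m d) j 0 <= T * (A *m d) j 0 by rewrite ler_wpM2r // ltW.
by have := T_le j dj; rewrite ler_pdivlMr // => ? ?; lra.
Qed.

Lemma quad_min_blocking Q c y d : Q^T = Q -> (forall v, 0 <= qform Q v) ->
  quad_min Q c y -> vdot (Q *m y + c) d < 0 ->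
  exists2 j, 0 < (A *m d) j 0 & (A *m y) j 0 = b j 0.
Proof.
move=> QT Q_ge0 [y_feas y_min] descent.
suff /existsP[j /andP[dj /eqP yj]] :
    [exists j, (0 < (A *m d) j 0) && ((A *m y) j 0 == b j 0)] by exists j.
apply: contraT => /existsPn no_block.
have d_free j : 0 < (A *m d) j 0 -> (A *m y) j 0 < b j 0.
  by move=> dj; rewrite lt_neqAle y_feas andbT; have := no_block j; rewrite dj.
have [T T_gt0 T_feas] := feasible_along y_feas d_free.
have [t /andP[t_gt0 t_le] t_descent] := descent_step_exists descent (Q_ge0 d) T_gt0.
have t_feas : feasible (y + t *: d) by apply: T_feas; rewrite ltW.
by have := y_min _ t_feas; rewrite quadobjD //; lra.
Qed.

Lemma quad_min_avi Q c y : Q^T = Q -> (forall v, 0 <= qform Q v) ->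
  quad_min Q c y -> avi_sol Q c y.
Proof.
move=> QT Q_ge0 y_min; split=> [|x x_feas]; first by case: y_min.
rewrite leNgt; apply/negP => /(quad_min_blocking QT Q_ge0 y_min)[j].
by rewrite mulmxBr mxBE subr_gt0 => + yj; rewrite yj ltNge x_feas.
Qed.

Lemma avi_sol_unique G g x1 x2 : posdef G -> avi_sol G g x1 -> avi_sol G g x2 -> x1 = x2.
Proof.
move=> Gpd [x1_feas x1_vi] [x2_feas x2_vi].
have vi1 := x1_vi _ x2_feas; have vi2 := x2_vi _ x1_feas.
apply/eqP; rewrite -subr_eq0; apply/eqP/(posdef_eq0 Gpd).
rewrite /qform mulmxBr !(vdotBl, vdotBr, vdotDl) !(vdotC (G *m _)) in vi1 vi2 *.
lra.
Qed.

Lemma licq_direction (S : {set 'I_m}) (X : 'M[R]_(n, #|S|)) :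
  subrows A S *m X = 1%:M -> forall i j (iS : i \in S), j \in S ->
  (A *m col (enum_rank_in iS i) X) j 0 = (j == i)%:R.
Proof.
move=> AX1 i j iS jS.
have <- : (subrows A S *m X) (enum_rank_in jS j) (enum_rank_in iS i) =
          (A *m col (enum_rank_in iS i) X) j 0.
  by rewrite !mxE; apply: eq_bigr => k _; rewrite !mxE enum_rankK_in.
rewrite AX1 mxE; congr (_%:R); congr (nat_of_bool _).
apply/idP/idP => /eqP ji; apply/eqP; last by apply: enum_val_inj; rewrite !enum_rankK_in.
by have := congr1 enum_val ji; rewrite !enum_rankK_in.
Qed.

Lemma quad_min_tight Q c y (S : {set 'I_m}) (X : 'M[R]_(n, #|S|)) j (jS : j \in S) :
  Q^T = Q -> (forall v, 0 <= qform Q v) -> quad_min Q c y -> subrows A S *m X = 1%:M ->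
  (forall i, i \notin S -> (A *m y) i 0 < b i 0) ->
  vdot (Q *m y + c) (col (enum_rank_in jS j) X) < 0 -> (A *m y) j 0 = b j 0.
Proof.
move=> QT Q_ge0 y_min AX1 strict /(quad_min_blocking QT Q_ge0 y_min)[i di yi].
have iS : i \in S by apply: contraT => /strict; rewrite yi ltxx.
by move: di; rewrite (licq_direction AX1 jS iS); case: eqP => [<- //|_]; rewrite ltxx.
Qed.

End Polyhedron.


Section KKT.
Variables (R : realType) (n m : nat).
Variables (H : 'M[R]_n) (f : 'cV[R]_n) (A : 'M[R]_(m, n)) (b : 'cV[R]_m).
Local Notation kkt := (kkt_sys H f A b).
Implicit Types (S : {set 'I_m}) (x : 'cV[R]_n) (l w : 'cV[R]_m).

Lemma kkt_sys_active S x l : kkt S x l -> kkt (active A b x) x l.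
Proof.
case=> stat [tight off]; split=> //; split=> [i|i i_inact]; first by rewrite inE => /eqP.
by apply: off; apply: contra i_inact => iS; rewrite inE tight.
Qed.

Lemma kkt_sys_avi S x l : kkt S x l -> (forall i, i \in S -> 0 <= l i 0) ->
  feasible A b x -> avi_sol A b H f x.
Proof.
case=> stat [tight off] l_ge0 x_feas; split=> // y y_feas.
have -> : H *m x + f = - (A^T *m l) by apply/eqP; rewrite -addr_eq0 addrAC stat addNr.
rewrite vdotNl vdot_mulmxl trmxK vdotE -sumrN sumr_ge0 // => j _.
case: (boolP (j \in S)) => [jS|/off ->]; last by rewrite mul0r oppr0.
by rewrite mulmxBr mxBE tight // -mulrN opprB mulr_ge0 ?l_ge0 // subr_ge0.
Qed.

Lemma kkt_sys_x_unique S x1 l1 x2 l2 : posdef H -> kkt S x1 l1 -> kkt S x2 l2 -> x1 = x2.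
Proof.
move=> Hpd [stat1 [tight1 off1]] [stat2 [tight2 off2]].
have stat : H *m (x1 - x2) = - (A^T *m (l1 - l2)) by move: stat1 stat2; entrywise_lra.
have orth : vdot (x1 - x2) (A^T *m (l1 - l2)) = 0.
  rewrite vdot_mulmxr trmxK vdotE big1 // => j _; rewrite mulmxBr !mxBE.
  case: (boolP (j \in S)) => jS; first by rewrite tight1 // tight2 // subrr mul0r.
  by rewrite off1 // off2 // subrr mulr0.
apply/eqP; rewrite -subr_eq0; apply/eqP/(posdef_eq0 Hpd).
by rewrite /qform stat vdotNr orth oppr0.
Qed.

Lemma licq_multiplier_eq0 S w : row_free (subrows A S) ->
  (forall j, j \notin S -> w j 0 = 0) -> A^T *m w = 0 -> w = 0.
Proof.
move=> licq w_off Aw0.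
have : (\row_r w (enum_val r) 0) *m subrows A S = 0.
  apply/rowP => k; have := congr1 (fun M : 'cV[R]_n => M k 0) Aw0; rewrite !mxE => Awk.
  apply: etrans Awk; rewrite [RHS](bigID (mem S)) /= [X in _ + X]big1 => [|j /w_off ->]; last first.
    by rewrite mulr0.
  by rewrite addr0 [RHS]big_enum_val; apply: eq_bigr => r _; rewrite !mxE mulrC.
rewrite -(mul0mx _ (subrows A S)) => /(row_free_inj licq) wS0.
apply/matrixP => j i; rewrite (ord1 i) mxE.
case: (boolP (j \in S)) => [jS|/w_off //].
by have := congr1 (fun v : 'rV[R]_#|S| => v 0 (enum_rank_in jS j)) wS0; rewrite !mxE enum_rankK_in.
Qed.

Lemma kkt_sys_multiplier_unique S x l1 l2 : row_free (subrows A S) ->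
  kkt S x l1 -> kkt S x l2 -> l1 = l2.
Proof.
move=> licq [stat1 [_ off1]] [stat2 [_ off2]].
apply/eqP; rewrite -subr_eq0; apply/eqP/(licq_multiplier_eq0 licq).
  by move=> j jS; rewrite mxBE off1 // off2 // subrr.
by move: stat1 stat2; entrywise_lra.
Qed.

Lemma complementarity_kkt_sys x l : feasible A b x -> H *m x + f + A^T *m l = 0 ->
  (forall i, 0 <= l i 0) -> vdot l (b - A *m x) = 0 -> kkt (active A b x) x l.
Proof.
move=> x_feas stat l_ge0 compl; split; first by apply/eqP; rewrite -addr_eq0 addrAC stat.
split=> [i|j j_inact]; first by rewrite inE => /eqP.
move/eqP: compl; rewrite vdotE psumr_eq0 => [/allP/(_ j (mem_index_enum _))|i _].
  rewrite /= mulf_eq0 mxBE subr_eq0 => /orP[/eqP //|/eqP bj].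
  by move: j_inact; rewrite inE bj eqxx.
by rewrite mulr_ge0 // mxBE subr_ge0.
Qed.

End KKT.

Section DRDAQP.
Variables (R : realType) (n m : nat).
Variables (H : 'M[R]_n) (f : 'cV[R]_n) (A : 'M[R]_(m, n)) (b : 'cV[R]_m) (rho : R).
Hypothesis rho_gt0 : 0 < rho.
Hypothesis H_posdef : posdef H.

Local Notation Ht := (Htil H rho).
Local Notation ft := (ftil H f rho).
Local Notation qp_sol := (qp_sol H f A b rho).
Local Notation znext := (znext H rho).
Implicit Types (e u v x y z : 'cV[R]_n).

(* The splitting [rho I + H = Mdr + Ndr] behind the update [znext]. *)
Definition Mdr : 'M[R]_n := rho%:M + 2^-1 *: Hs H.
Definition Ndr : 'M[R]_n := H - 2^-1 *: Hs H.
Definition lyap e : R := qform (invmx Mdr) ((Mdr - Ndr) *m e).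

Lemma Hs_sym : (Hs H)^T = Hs H.
Proof. by rewrite /Hs linearZ /= linearD /= trmxK addrC. Qed.

Lemma qform_Hs v : qform (Hs H) v = qform H v.
Proof. by rewrite [RHS]qformE. Qed.

Lemma Hs_posdef : posdef (Hs H).
Proof. by move=> v /H_posdef; rewrite qform_Hs. Qed.

Lemma qform_Htil v : qform Ht v = rho * vdot v v + qform H v.
Proof. by rewrite -qform_Hs /qform /Htil mulmxDl mul_scalar_mx vdotDr vdotZr. Qed.

Lemma qform_Mdr v : qform Mdr v = rho * vdot v v + 2^-1 * qform H v.
Proof. by rewrite -qform_Hs /qform /Mdr mulmxDl mul_scalar_mx -scalemxAl vdotDr !vdotZr. Qed.

Lemma qform_Ndr v : qform Ndr v = 2^-1 * qform H v.
Proof.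
rewrite -qform_Hs /qform /Ndr mulmxBl -scalemxAl vdotBr vdotZr -/(qform H v).
by rewrite -qform_Hs /qform; lra.
Qed.

Lemma posdef_rho_shift (Q : 'M[R]_n) c : 0 <= c ->
  (forall v, qform Q v = rho * vdot v v + c * qform H v) -> posdef Q.
Proof.
move=> c_ge0 QE v v0; rewrite QE ltr_pwDl ?mulr_ge0 ?posdef_ge0 //.
by rewrite mulr_gt0 ?vdot_gt0.
Qed.

Lemma Htil_sym : Ht^T = Ht.
Proof. by rewrite /Htil linearD /= tr_scalar_mx Hs_sym. Qed.

Lemma Htil_posdef : posdef Ht.
Proof. by apply: (posdef_rho_shift ler01) => v; rewrite qform_Htil mul1r. Qed.

Lemma Mdr_sym : Mdr^T = Mdr.
Proof. by rewrite /Mdr linearD /= tr_scalar_mx linearZ /= Hs_sym. Qed.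

Lemma Mdr_posdef : posdef Mdr.
Proof. by apply: (posdef_rho_shift (c := 2^-1)) => [|v]; rewrite ?qform_Mdr ?invr_ge0. Qed.

Lemma Mdr_add_Ndr : Mdr + Ndr = rho%:M + H.
Proof. by rewrite /Mdr /Ndr addrACA subrr addr0. Qed.

Lemma Mdr_add_Ndr_unitmx : Mdr + Ndr \in unitmx.
Proof.
apply/posdef_unitmx/(posdef_rho_shift ler01) => v.
by rewrite /qform mulmxDl vdotDr -!/(qform _ v) qform_Mdr qform_Ndr; lra.
Qed.

Lemma qp_sol_quad_min z y : qp_sol z y -> quad_min A b Ht (ft z) y.
Proof.
case=> y_feas y_min; split=> // x /y_min.
by rewrite /qp_obj /quadobj /qform /vdot !mulmxA.
Qed.

Lemma qp_sol_avi z y : qp_sol z y -> avi_sol A b Ht (ft z) y.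
Proof.
move/qp_sol_quad_min; apply: quad_min_avi Htil_sym _ => v.
exact: posdef_ge0 Htil_posdef.
Qed.

Lemma qp_sol_unique z y1 y2 : qp_sol z y1 -> qp_sol z y2 -> y1 = y2.
Proof. by move=> /qp_sol_avi y1_avi /qp_sol_avi; apply: avi_sol_unique Htil_posdef y1_avi. Qed.

(* The candidate value [|yt - zt|] that step 2 computes from the active set [S]. *)
Definition delta_value (S : {set 'I_m}) (r : R) : Prop :=
  exists zt lam yt, kkt_sys H f A b S zt lam /\ qp_sol zt yt /\ r = norm2 (yt - zt).

Lemma delta_value_functional S r1 r2 : delta_value S r1 -> delta_value S r2 -> r1 = r2.
Proof.
move=> [z1 [l1 [y1 [kkt1 [y1_sol ->]]]]] [z2 [l2 [y2 [kkt2 [y2_sol ->]]]]].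
have ez := kkt_sys_x_unique H_posdef kkt1 kkt2; subst z2.
by rewrite (qp_sol_unique y1_sol y2_sol).
Qed.

(* Termination measure for the updates of [delta]. *)
Definition delta_rank (d : option R) : nat :=
  #|[set S | `[< exists2 r, delta_value S r & lt_delta d r >]]|.

Lemma delta_rank_lt d S r :
  delta_value S r -> lt_delta d r -> (delta_rank (Some r) < delta_rank d)%N.
Proof.
move=> Sr dr; apply: proper_card; apply/properP; split.
  apply/subsetP => S'; rewrite !inE => /asboolP[r' S'r' /= r'r].
  apply/asboolP; exists r' => //; case: d dr => //= d' rd'; exact: lt_trans rd'.
exists S; rewrite inE; first by apply/asboolP; exists r.
by apply/asboolP => -[r' /(delta_value_functional Sr) <-]; rewrite /= ltxx.
Qed.

Local Notation dr_step := (dr_step H f A b rho).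

Lemma dr_step_qp_sol s o : dr_step s o -> exists y, qp_sol (st_z s) y.
Proof. by case=> y []; exists y. Qed.

Lemma dr_step_cont_repeat s s' y : dr_step s (Cont s') -> qp_sol (st_z s) y ->
  st_prev s = Some (active A b y) -> exists zt lam, kkt_sys H f A b (active A b y) zt lam /\
    ~ ((forall i, i \in active A b y -> 0 <= lam i 0) /\ feasible A b zt).
Proof.
move=> [y' [y'_sol step]] y_sol prev.
rewrite (qp_sol_unique y'_sol y_sol) prev eqxx in step.
by have [zt [lam [kkt [[_ [_ //]]|[no_stop _]]]]] := step; exists zt, lam.
Qed.

Lemma dr_step_cont_new s s' y : dr_step s (Cont s') -> qp_sol (st_z s) y ->
  st_prev s <> Some (active A b y) -> st_prev s' = Some (active A b y).
Proof.
move=> [y' [y'_sol step]] y_sol prev; rewrite (qp_sol_unique y'_sol y_sol) in step.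
by move: step; case: eqP => // _ [->].
Qed.

Lemma dr_step_cont_update s s' y : dr_step s (Cont s') -> qp_sol (st_z s) y ->
  (st_z s' = znext y (st_z s) /\ st_delta s' = st_delta s) \/
  (delta_rank (st_delta s') < delta_rank (st_delta s))%N.
Proof.
move=> [y' [y'_sol step]] y_sol; rewrite (qp_sol_unique y'_sol y_sol) in step.
case: eqP step => [_|_ [->]]; last by left.
move=> [zt [lam [kkt [[_ [_ //]]|[_ [yt [yt_sol]]]]]]].
case: ifP => [dr [->]|_ [->]]; last by left.
right => /=; apply: (delta_rank_lt (S := active A b y) _ dr).
by exists zt, lam, yt.
Qed.

Lemma dr_run_eventually_plain st ys : (forall k, dr_step (st k) (Cont (st k.+1))) ->
  (forall k, qp_sol (st_z (st k)) (ys k)) ->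
  exists K, forall k, (K <= k)%N -> st_z (st k.+1) = znext (ys k) (st_z (st k)).
Proof.
move=> run ys_sol; pose rank k := delta_rank (st_delta (st k)).
have rank_noninc k : (rank k.+1 <= rank k)%N.
  by rewrite /rank; case: (dr_step_cont_update (run k) (ys_sol k)) => [[_ ->]|/ltnW].
have [K rank_const] := nonincn_stationary rank_noninc.
exists K => k Kk; case: (dr_step_cont_update (run k) (ys_sol k)) => [[-> //]|].
by move: (rank_const k.+1 (leqW Kk)) (rank_const k Kk); rewrite /rank => -> ->; rewrite ltnn.
Qed.

Section Convergence.
Variable xs : 'cV[R]_n.

Lemma qp_grad_shift z y :
  Ht *m y + ft z = H *m xs + f + Ht *m (y - xs) - (Mdr - Ndr) *m (z - xs).
Proof. by rewrite /ftil /Htil /Mdr /Ndr; entrywise_lra. Qed.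

Lemma znext_shift z y :
  (Mdr + Ndr) *m (znext y z - xs) = Mdr *m (y - xs) + Ndr *m (z - xs).
Proof.
rewrite mulmxBr {1}Mdr_add_Ndr /znext mulKVmx -?Mdr_add_Ndr ?Mdr_add_Ndr_unitmx //.
by rewrite /Mdr /Ndr; entrywise_lra.
Qed.

Lemma qp_grad_znext z y : Ht *m y + ft z = H *m xs + f +
  (Mdr + Ndr) *m (2 *: (znext y z - xs) - (z - xs)) - rho *: (y - xs).
Proof.
move: (znext_shift z y); rewrite qp_grad_shift.
move: (znext y z) => z'; rewrite /Htil /Mdr /Ndr; entrywise_lra.
Qed.

Hypothesis xs_avi : avi_sol A b H f xs.

Lemma qp_sol_monotone z y : qp_sol z y ->
  qform Ht (y - xs) <= vdot (y - xs) ((Mdr - Ndr) *m (z - xs)).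
Proof.
move=> y_sol; have y_vi := (qp_sol_avi y_sol).2 _ xs_avi.1.
have xs_vi := xs_avi.2 _ (qp_sol_avi y_sol).1.
rewrite qp_grad_shift -[xs - y]opprB vdotNr !(vdotDl, vdotBl, vdotNl) in y_vi.
rewrite vdotDl in xs_vi.
by rewrite /qform (vdotC (y - xs)) [X in _ <= X]vdotC; lra.
Qed.

Lemma lyap_ge0 e : 0 <= lyap e.
Proof. exact: qform_invmx_ge0 Mdr_sym Mdr_posdef. Qed.

Lemma lyap_decrease e u e' :
  qform Ht u <= vdot u ((Mdr - Ndr) *m e) ->
  (Mdr + Ndr) *m e' = Mdr *m u + Ndr *m e ->
  lyap e' + qform H u + qform H (2 *: e' - e) <= lyap e.
Proof.
set a := 2 *: e' - e; set s := (Mdr - Ndr) *m e => mono step.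
have lyapE : lyap e' = lyap e + 2 * vdot s (a - u) + qform Mdr (a - u).
  rewrite -qform_invmx_shift ?Mdr_sym ?(posdef_unitmx Mdr_posdef) //; congr qform.
  by move: step; rewrite /s /a; entrywise_lra.
have aE : (Mdr + Ndr) *m a = 2 *: (Mdr *m u) - s by move: step; rewrite /s /a; entrywise_lra.
clearbody a s.
have sa : vdot a s = 2 * vdot a (Mdr *m u) - qform Mdr a - 2^-1 * qform H a.
  have := congr1 (vdot a) aE; rewrite mulmxDl vdotDr -!/(qform _ a) qform_Ndr.
  by rewrite vdotBr vdotZr; lra.
have dE : qform Mdr (a - u) = qform Mdr a - 2 * vdot a (Mdr *m u) + qform Mdr u.
  by rewrite qformD ?Mdr_sym // /qform !(mulmxN, vdotNr, vdotNl) opprK mulrN.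
have := posdef_ge0 (a - u) Mdr_posdef; rewrite dE.
have := qform_Mdr u; have := qform_Mdr a; move: mono; rewrite qform_Htil.
rewrite lyapE vdotBr (vdotC s a) (vdotC s u) sa; lra.
Qed.

Lemma qp_sol_lyap_decrease z y : qp_sol z y ->
  lyap (znext y z - xs) + qform H (y - xs) +
  qform H (2 *: (znext y z - xs) - (z - xs)) <= lyap (z - xs).
Proof. by move=> y_sol; apply: lyap_decrease (qp_sol_monotone y_sol) (znext_shift z y). Qed.

Variable ls : 'cV[R]_m.
Local Notation S := (active A b xs).
Hypothesis licq : row_free (subrows A S).
Hypothesis ls_kkt : kkt_sys H f A b S xs ls.
Hypothesis ls_pos : forall i, i \in S -> 0 < ls i 0.

Lemma multiplier_vdot_direction (X : 'M[R]_(n, #|S|)) j (jS : j \in S) :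
  subrows A S *m X = 1%:M -> vdot (A^T *m ls) (col (enum_rank_in jS j) X) = ls j 0.
Proof.
move=> AX1; have [_ [_ ls_off]] := ls_kkt.
rewrite vdot_mulmxl trmxK vdotE (bigD1 j) //= big1 ?addr0 => [|i ij].
  by rewrite (licq_direction AX1 jS jS) eqxx mulr1.
case: (boolP (i \in S)) => iS; last by rewrite ls_off ?mul0r.
by rewrite (licq_direction AX1 jS iS) (negbTE ij) mulr0.
Qed.

Lemma active_identification : exists2 eps, 0 < eps & forall z y, qp_sol z y ->
  qform H (y - xs) < eps -> qform H (2 *: (znext y z - xs) - (z - xs)) < eps ->
  active A b y = S.
Proof.
have [X AX1] := row_freeP licq.
(* [eta] bounds from below the slacks of the inactive constraints at [xs] and, by
   strict complementarity, the multipliers of the active ones. *)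
pose margin i := if i \in S then ls i 0 else b i 0 - (A *m xs) i 0.
have [eta eta_gt0 eta_le] : exists2 eta, 0 < eta & forall i, true -> eta <= margin i.
  apply: finite_pos_lower_bound => i _; rewrite /margin; case: ifPn => [/ls_pos //|].
  by rewrite inE subr_gt0 lt_neqAle eq_sym => ->; rewrite xs_avi.1.
pose cs := [seq (row j A)^T | j <- enum 'I_m] ++
  [seq rho *: col r X | r <- enum 'I_#|S|] ++
  [seq (Mdr + Ndr)^T *m col r X | r <- enum 'I_#|S|].
have cs_row j : (row j A)^T \in cs.
  by rewrite mem_cat (map_f (fun k => (row k A)^T)) ?mem_enum.
have cs_rho r : rho *: col r X \in cs.
  by rewrite !mem_cat (map_f (fun k => rho *: col k X)) ?mem_enum ?orbT.
have cs_P r : (Mdr + Ndr)^T *m col r X \in cs.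
  by rewrite !mem_cat (map_f (fun k => (Mdr + Ndr)^T *m col k X)) ?mem_enum ?orbT.
have eta2_gt0 : 0 < eta / 2 by rewrite divr_gt0.
have [eps eps_gt0 small] := qform_small_vdot_small cs Hs_sym Hs_posdef eta2_gt0.
exists eps => // z y y_sol; rewrite -!qform_Hs => /small u_small /small a_small.
have inactive j : j \notin S -> (A *m y) j 0 < b j 0.
  move=> jS; have := eta_le j isT; rewrite /margin (negbTE jS).
  have := u_small _ (cs_row j); rewrite ltr_norml -mulmx_entry_vdot mulmxBr mxBE.
  lra.
apply/setP => j; rewrite inE; case: (boolP (j \in S)) => jS; last first.
  by rewrite lt_eqF ?inactive.
apply/eqP; apply: (quad_min_tight Htil_sym _ (qp_sol_quad_min y_sol) AX1 inactive).
  by move=> v; apply: posdef_ge0 Htil_posdef.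
have xs_grad : H *m xs + f = - (A^T *m ls).
  by apply/eqP; rewrite -addr_eq0 addrAC ls_kkt.1 addNr.
rewrite qp_grad_znext xs_grad !(vdotDl, vdotBl, vdotNl) multiplier_vdot_direction //.
have := a_small _ (cs_P (enum_rank_in jS j)); have := u_small _ (cs_rho (enum_rank_in jS j)).
rewrite vdot_mulmxl trmxK !vdotZl !(vdotC (col _ X)) !ltr_norml.
have := eta_le j isT; rewrite /margin jS; lra.
Qed.

Lemma kkt_sys_active_xs zt lam : kkt_sys H f A b S zt lam -> zt = xs /\ lam = ls.
Proof.
move=> kkt; have ez := kkt_sys_x_unique H_posdef kkt ls_kkt; subst zt.
by split=> //; apply: kkt_sys_multiplier_unique licq kkt ls_kkt.
Qed.

Lemma kkt_stop_correct S' x l : kkt_sys H f A b S' x l ->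
  (forall i, i \in S' -> 0 <= l i 0) -> feasible A b x -> x = xs /\ l = ls.
Proof.
move=> kkt l_ge0 x_feas.
have ex := avi_sol_unique H_posdef (kkt_sys_avi kkt l_ge0 x_feas) xs_avi; subst x.
exact/kkt_sys_active_xs/(kkt_sys_active kkt).
Qed.

Lemma dr_iteration_active (zs ys : nat -> 'cV[R]_n) :
  (forall k, qp_sol (zs k) (ys k)) -> (forall k, zs k.+1 = znext (ys k) (zs k)) ->
  exists K, forall k, (K <= k)%N -> active A b (ys k) = S.
Proof.
move=> ys_sol zs_next; have [eps eps_gt0 identify] := active_identification.
pose c k := qform H (ys k - xs) + qform H (2 *: (zs k.+1 - xs) - (zs k - xs)).
have [K c_lt] : exists K, forall k, (K <= k)%N -> c k < eps.
  apply: (gaps_eventually_lt (v := fun k => lyap (zs k - xs))) eps_gt0 _ _ _ => k.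
  - exact: lyap_ge0.
  - by rewrite addr_ge0 ?posdef_ge0.
  - by have := qp_sol_lyap_decrease (ys_sol k); rewrite /c zs_next addrA.
exists K => k /c_lt; rewrite /c zs_next => c_small.
have := posdef_ge0 (ys k - xs) H_posdef.
have := posdef_ge0 (2 *: (znext (ys k) (zs k) - xs) - (zs k - xs)) H_posdef.
by move=> ? ?; apply: identify (ys_sol k) _ _; lra.
Qed.

Lemma dr_run_finite st : ~ (forall k, dr_step (st k) (Cont (st k.+1))).
Proof.
move=> run; have [ys ys_sol] := choice (fun k => dr_step_qp_sol (run k)).
have [K0 plain] := dr_run_eventually_plain run ys_sol.
have zs_next k :
    st_z (st (K0 + k.+1)%N) = znext (ys (K0 + k)%N) (st_z (st (K0 + k)%N)).
  by rewrite addnS plain ?leq_addr.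
have [K1 active_S] := dr_iteration_active (fun k => ys_sol (K0 + k)%N) zs_next.
have {}active_S k : (K0 + K1 <= k)%N -> active A b (ys k) = S.
  move=> Kk; have K0k := leq_trans (leq_addr K1 K0) Kk.
  by have := active_S (k - K0)%N; rewrite subnKC // -(leq_add2l K0) subnKC //; apply.
have no_repeat k : (K0 + K1 <= k)%N -> st_prev (st k) <> Some S.
  move=> Kk prev; rewrite -(active_S k Kk) in prev.
  have [zt [lam [kkt no_stop]]] := dr_step_cont_repeat (run k) (ys_sol k) prev.
  rewrite active_S // in kkt no_stop; move: no_stop.
  have [-> ->] := kkt_sys_active_xs kkt.
  by case; split=> [i /ls_pos/ltW|]; last exact: xs_avi.1.
case: (eqVneq (st_prev (st (K0 + K1))) (Some S)) => [|/eqP prev]; first exact: no_repeat.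
apply: (no_repeat (K0 + K1).+1 (leqnSn _)); rewrite -(active_S _ (leqnn _)) in prev *.
exact: dr_step_cont_new (run _) (ys_sol _) prev.
Qed.

End Convergence.
End DRDAQP.

Theorem theorem2 (R : realType) (n m : nat)
  (H : 'M[R]_n) (f : 'cV[R]_n) (A : 'M[R]_(m, n)) (b : 'cV[R]_m) (rho : R)
  (z0 : 'cV[R]_n) (xstar : 'cV[R]_n) (lamstar : 'cV[R]_m) :
  0 < rho ->
  (exists x, feasible A b x) ->
  (forall v : 'cV[R]_n, v != 0 -> 0 < (v^T *m (H + H^T) *m v) 0 0) ->
  (* xstar solves the affine variational inequality *)
  feasible A b xstar ->
  (forall y, feasible A b y -> 0 <= ((H *m xstar + f)^T *m (y - xstar)) 0 0) ->
  (* LICQ *)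
  row_free (subrows A (active A b xstar)) ->
  (* lamstar : KKT multiplier *)
  H *m xstar + f + A^T *m lamstar = 0 ->
  (forall i, 0 <= lamstar i 0) ->
  (lamstar^T *m (b - A *m xstar)) 0 0 = 0 ->
  (* strict complementarity *)
  (forall i, i \in active A b xstar -> 0 < lamstar i 0) ->
  (* every execution terminates after finitely many iterations ... *)
  (forall st : nat -> state R n m, st 0%N = @init_state R n m z0 ->
     ~ (forall k, dr_step H f A b rho (st k) (Cont (st k.+1)))) /\
  (* ... and whenever it stops it returns (xstar, lamstar) *)
  (forall (st : nat -> state R n m) (K : nat) xr lr, st 0%N = @init_state R n m z0 ->
     (forall k, (k < K)%N -> dr_step H f A b rho (st k) (Cont (st k.+1))) ->
     dr_step H f A b rho (st K) (Stop xr lr) ->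
     xr = xstar /\ lr = lamstar).
Proof.
move=> rho_gt0 _ HHT_posdef xs_feas xs_vi licq stat ls_ge0 compl ls_pos.
have H_posdef : posdef H.
  move=> v /HHT_posdef vHv; rewrite qformE /qform -scalemxAl vdotZr.
  by rewrite mulr_gt0 ?invr_gt0 // /vdot mulmxA.
have xs_avi : avi_sol A b H f xstar by [].
have ls_kkt := complementarity_kkt_sys xs_feas stat ls_ge0 compl.
split=> [st _ run|st K xr lr _ _ [y [y_sol stop]]].
  exact: (dr_run_finite rho_gt0 H_posdef xs_avi licq ls_kkt ls_pos run).
case: eqP stop => // _ [zt [lam [kkt [[l_ge0 [zt_feas [-> ->]]]|[_ [yt [_]]]]]]].
  exact: (kkt_stop_correct H_posdef xs_avi licq ls_kkt kkt l_ge0 zt_feas).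
by case: ifP.
Qed.
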